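(* Let $m,n,u,v\in\mathbb{R}$ with $m+v\neq0$ and $mu+nv=0$, and let $(G_5,g,J)$ be the three-dimensional Lorentzian Lie group described in the context. Then every left-invariant vector field $\xi=\lambda_1\overline{e}_1+\lambda_2\overline{e}_2+\lambda_3\overline{e}_3$ ($\lambda_1,\lambda_2,\lambda_3\in\mathbb{R}$ arbitrary constants) is a left-invariant Ricci collineation of $(G_5,g,J)$ associated to the Yano connection $\nabla^{*}$.
   Context: $G_5$ is a connected three-dimensional Lie group whose Lie algebra has a basis $\{\overline{e}_1,\overline{e}_2,\overline{e}_3\}$ (left-invariant vector fields) with $[\overline{e}_1,\overline{e}_2]=0$, $[\overline{e}_1,\overline{e}_3]=m\overline{e}_1+n\overline{e}_2$, $[\overline{e}_2,\overline{e}_3]=u\overline{e}_1+v\overline{e}_2$, where $m+v\neq0$ and $mu+nv=0$. The metric $g$ is the left-invariant Lorentzian metric with $g(\overline{e}_1,\overline{e}_1)=g(\overline{e}_2,\overline{e}_2)=1$, $g(\overline{e}_3,\overline{e}_3)=-1$, $g(\overline{e}_i,\overline{e}_j)=0$ for $i\neq j$. $J$ is the left-invariant product structure with $J\overline{e}_1=\overline{e}_1$, $J\overline{e}_2=\overline{e}_2$, $J\overline{e}_3=-\overline{e}_3$. With $\nabla^{LC}$ the Levi-Civita connection of $g$, the Yano connection is $\nabla^{*}_XY=\nabla^{LC}_XY-\frac12(\nabla^{LC}_YJ)JX-\frac14[(\nabla^{LC}_XJ)JY-(\nabla^{LC}_{JX}J)Y]$; its curvature is $R^{*}(X,Y)Z=\nabla^{*}_X\nabla^{*}_YZ-\nabla^{*}_Y\nabla^{*}_XZ-\nabla^{*}_{[X,Y]}Z$;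 its Ricci tensor is $\mathrm{Ric}^{*}(X,Y)=-g(R^{*}(X,\overline{e}_1)Y,\overline{e}_1)-g(R^{*}(X,\overline{e}_2)Y,\overline{e}_2)+g(R^{*}(X,\overline{e}_3)Y,\overline{e}_3)$; and $\overline{\mathrm{Ric}^{*}}(X,Y)=\frac12(\mathrm{Ric}^{*}(X,Y)+\mathrm{Ric}^{*}(Y,X))$. For a left-invariant vector field $\xi$, $(\mathrm{L}_{\xi}\overline{\mathrm{Ric}^{*}})(X,Y)=\xi(\overline{\mathrm{Ric}^{*}}(X,Y))-\overline{\mathrm{Ric}^{*}}([\xi,X],Y)-\overline{\mathrm{Ric}^{*}}(X,[\xi,Y])$; $\xi$ is a left-invariant Ricci collineation if $\mathrm{L}_{\xi}\overline{\mathrm{Ric}^{*}}=0$. *)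

(* concrete reals R.
   Left-invariant vector fields on G_5 are identified with their coordinates
   (x1,x2,x3) in the basis {e1,e2,e3} of the Lie algebra. *)
From Stdlib Require Import Reals.
Open Scope R_scope.

Record vec : Type := Vec { c1 : R; c2 : R; c3 : R }.

Definition vadd (X Y : vec) : vec := Vec (c1 X + c1 Y) (c2 X + c2 Y) (c3 X + c3 Y).
Definition vscale (a : R) (X : vec) : vec := Vec (a * c1 X) (a * c2 X) (a * c3 X).
Definition vopp (X : vec) : vec := vscale (-1) X.
Definition vsub (X Y : vec) : vec := vadd X (vopp Y).

Definition e1 : vec := Vec 1 0 0.
Definition e2 : vec := Vec 0 1 0.
Definition e3 : vec := Vec 0 0 1.

(* Lie bracket of G_5, extended bilinearly from
   [e1,e2]=0, [e1,e3]=m e1+n e2, [e2,e3]=u e1+v e2. *)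
Definition brk (m n u v : R) (X Y : vec) : vec :=
  let a := c1 X * c3 Y - c3 X * c1 Y in
  let b := c2 X * c3 Y - c3 X * c2 Y in
  Vec (a * m + b * u) (a * n + b * v) 0.

Definition g (X Y : vec) : R := c1 X * c1 Y + c2 X * c2 Y - c3 X * c3 Y.

Definition J (X : vec) : vec := Vec (c1 X) (c2 X) (- c3 X).

(* Levi-Civita connection on left-invariant fields, via the Koszul formula
   2 g(nabla_X Y, Z) = g([X,Y],Z) - g([Y,Z],X) + g([Z,X],Y)
   (the derivative terms vanish for left-invariant fields), solved in the
   orthonormal basis with g(e_k,e_k) = 1,1,-1. *)
Definition koszul (m n u v : R) (X Y Z : vec) : R :=
  / 2 * (g (brk m n u v X Y) Z - g (brk m n u v Y Z) X + g (brk m n u v Z X) Y).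

Definition LC (m n u v : R) (X Y : vec) : vec :=
  Vec (koszul m n u v X Y e1) (koszul m n u v X Y e2) (- koszul m n u v X Y e3).

Definition nablaJ (m n u v : R) (X Y : vec) : vec :=
  vsub (LC m n u v X (J Y)) (J (LC m n u v X Y)).

Definition Yano (m n u v : R) (X Y : vec) : vec :=
  vsub (vsub (LC m n u v X Y) (vscale (/ 2) (nablaJ m n u v Y (J X))))
       (vscale (/ 4) (vsub (nablaJ m n u v X (J Y)) (nablaJ m n u v (J X) Y))).

Definition Rstar (m n u v : R) (X Y Z : vec) : vec :=
  vsub (vsub (Yano m n u v X (Yano m n u v Y Z)) (Yano m n u v Y (Yano m n u v X Z)))
       (Yano m n u v (brk m n u v X Y) Z).

Definition Ricstar (m n u v : R) (X Y : vec) : R :=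
  - g (Rstar m n u v X e1 Y) e1 - g (Rstar m n u v X e2 Y) e2
  + g (Rstar m n u v X e3 Y) e3.

Definition Ricsym (m n u v : R) (X Y : vec) : R :=
  / 2 * (Ricstar m n u v X Y + Ricstar m n u v Y X).

(* Lie derivative of Ricsym along a left-invariant xi, evaluated on
   left-invariant X, Y.  The term xi(Ricsym(X,Y)) is 0 because Ricsym(X,Y) is
   a constant function for left-invariant X, Y. *)
Definition LieRicsym (m n u v : R) (xi X Y : vec) : R :=
  0 - Ricsym m n u v (brk m n u v xi X) Y - Ricsym m n u v X (brk m n u v xi Y).

Definition is_Ricci_collineation (m n u v : R) (xi : vec) : Prop :=
  forall X Y : vec, LieRicsym m n u v xi X Y = 0.

(* In the frame (e1,e2,e3) the Yano connection is nabla*_X Y = x3 [e3,Y].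
   Since ad e3 is linear and every bracket lies in span(e1,e2), the
   curvature reduces to x3 y3 ((ad e3)^2 - (ad e3)^2) Z = 0: the Yano
   connection is flat for all m, n, u, v.  Hence its Ricci tensor vanishes
   identically and every left-invariant field is a Ricci collineation. *)
From Pilot Require Import Defs.
From Stdlib Require Import Reals.
Open Scope R_scope.

Definition vzero : vec := Vec 0 0 0.

Lemma Yano_ad_e3 (m n u v : R) (X Y : vec) :
  Yano m n u v X Y = vscale (c3 X) (brk m n u v e3 Y).
Proof.
  destruct X as [x1 x2 x3], Y as [y1 y2 y3].
  cbv beta iota zeta delta [Yano nablaJ LC koszul brk g J vsub vadd vopp vscale
    e1 e2 e3 Defs.c1 Defs.c2 Defs.c3].
  f_equal; field.
Qed.

Lemma c3_brk (m n u v : R) (X Y : vec) : c3 (brk m n u v X Y) = 0.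
Proof. reflexivity. Qed.

Lemma brk_scale_r (m n u v a : R) (X Y : vec) :
  brk m n u v X (vscale a Y) = vscale a (brk m n u v X Y).
Proof.
  destruct X as [x1 x2 x3], Y as [y1 y2 y3].
  cbv beta iota zeta delta [brk vscale Defs.c1 Defs.c2 Defs.c3]; f_equal; ring.
Qed.

Lemma Rstar_eq0 (m n u v : R) (X Y Z : vec) : Rstar m n u v X Y Z = vzero.
Proof.
  unfold Rstar; rewrite !Yano_ad_e3, c3_brk, !brk_scale_r.
  set (W := brk m n u v e3 (brk m n u v e3 Z)).
  destruct W as [w1 w2 w3].
  cbv beta iota zeta delta [vsub vadd vopp vscale vzero Defs.c1 Defs.c2 Defs.c3].
  f_equal; ring.
Qed.

Lemma g_vzero_l (Y : vec) : g vzero Y = 0.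
Proof. cbv beta iota zeta delta [g vzero Defs.c1 Defs.c2 Defs.c3]; ring. Qed.

Lemma Ricsym_eq0 (m n u v : R) (X Y : vec) : Ricsym m n u v X Y = 0.
Proof.
  unfold Ricsym, Ricstar; rewrite !Rstar_eq0, !g_vzero_l; ring.
Qed.

Lemma Ricci_collineation_all (m n u v : R) (xi : vec) :
  is_Ricci_collineation m n u v xi.
Proof.
  intros X Y; unfold LieRicsym; rewrite !Ricsym_eq0; ring.
Qed.

Theorem theorem4p3 (m n u v : R) (Hmv : m + v <> 0) (Hmu : m * u + n * v = 0)
  (l1 l2 l3 : R) :
  is_Ricci_collineation m n u v
    (vadd (vadd (vscale l1 e1) (vscale l2 e2)) (vscale l3 e3)).
Proof. apply Ricci_collineation_all. Qed.
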